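(* For $a\in[1,2]$ and $b>1$ define $g(a,b)=x\,x_1+y\,y_1$, where $$x=\frac{\sqrt{a^2-1}\,(a^3-8)}{a^6},\quad x_1=(\sqrt{a^2-1}-\sqrt{b^2-1})^3+a^3,\quad y=\frac{\sqrt{b^2-1}\,(b^3-8)}{b^6},\quad y_1=(\sqrt{a^2-1}-\sqrt{b^2-1})^3+b^3.$$ Then for every $a\in(1,2)$ there exists a unique $b=\hat b(a)\in(\sqrt2,5/2)$ such that $g(a,b)<0$ for $\sqrt2<b<\hat b(a)$, $g(a,\hat b(a))=0$, and $g(a,b)>0$ for $\hat b(a)<b<5/2$. *)

From Stdlib Require Import Reals Lra.
Open Scope R_scope.

Definition g (a b : R) : R :=
  let sa := sqrt (a ^ 2 - 1) in
  let sb := sqrt (b ^ 2 - 1) in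
  let x := sa * (a ^ 3 - 8) / a ^ 6 in
  let x1 := (sa - sb) ^ 3 + a ^ 3 in
  let y := sb * (b ^ 3 - 8) / b ^ 6 in
  let y1 := (sa - sb) ^ 3 + b ^ 3 in
  x * x1 + y * y1.

(* With u = a + sqrt (a^2 - 1) one has a = (u + 1/u)/2 and sqrt (a^2 - 1) = (u - 1/u)/2, so at
   the rational point b0 = 965/387, where sqrt (b0^2 - 1) = 884/387 because
   965^2 - 387^2 = 884^2, the value g(a, b0) is a positive multiple of a polynomial in u
   which is positive for 1 <= u <= 15/4.  Since g(a, sqrt 2) < 0, the intermediate value
   theorem gives a zero in (sqrt 2, b0).  Uniqueness and the sign pattern come from
   dg/db > 0 on [5/4, 5/2]: multiplied by t b^7, t = sqrt (b^2 - 1), the derivative is a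
   nonnegative term plus an expression that [(s - t)^3 >= - t^3] and [2 b t <= 2 b^2 - 1]
   bound below by one-variable polynomials in b.
   Positivity of a polynomial on an interval is checked by computation: after rescaling
   the variable, Taylor-expand at each integer point and compare the constant coefficient
   with the total mass of the negative coefficients. *)

From Stdlib Require Import Reals Lra Lia ZArith List Ranalysis5.
From Coquelicot Require Import Coquelicot.
Import ListNotations.
Open Scope R_scope.

Fixpoint peval (p : list Z) (x : R) : R :=
  match p with
  | [] => 0
  | c :: q => IZR c + x * peval q x
  end.

Fixpoint padd (p q : list Z) : list Z :=
  match p, q with
  | [], _ => q
  | _, [] => p
  | c :: p', d :: q' => (c + d)%Z :: padd p' q'
  end.

Lemma peval_padd p q x : peval (padd p q) x = peval p x + peval q x.
Proof.
  revert q; induction p as [|c p IH]; intros [|d q]; simpl; try ring.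
  rewrite plus_IZR, IH; ring.
Qed.

Lemma peval_map_mul k p x : peval (map (Z.mul k) p) x = IZR k * peval p x.
Proof. induction p as [|c p IH]; simpl; [ring|]. rewrite mult_IZR, IH; ring. Qed.

Fixpoint ptaylor (k : Z) (p : list Z) : list Z :=
  match p with
  | [] => []
  | c :: q => let r := ptaylor k q in padd [c] (padd (0%Z :: r) (map (Z.mul k) r))
  end.

Lemma peval_ptaylor k p x : peval (ptaylor k p) x = peval p (IZR k + x).
Proof.
  induction p as [|c p IH]; [simpl; ring|].
  cbn [ptaylor]. rewrite !peval_padd, peval_map_mul. simpl. rewrite IH; ring.
Qed.

Fixpoint rescale (m : Z) (p : list Z) : list Z :=
  match p with
  | [] => []
  | c :: q => (c * m ^ Z.of_nat (length q))%Z :: rescale m q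
  end.

Lemma peval_rescale m p x :
  peval (rescale m p) (IZR m * x) = IZR m ^ pred (length p) * peval p x.
Proof.
  induction p as [|c q IH]; [simpl; ring|].
  cbn [rescale peval length]. rewrite mult_IZR, <- pow_IZR, IH.
  destruct q; simpl; ring.
Qed.

Fixpoint neg_mass (p : list Z) : Z :=
  match p with
  | [] => 0
  | c :: q => Z.max 0 (- c) + neg_mass q
  end.

Lemma neg_mass_nonneg p : (0 <= neg_mass p)%Z.
Proof. induction p as [|c p IH]; simpl; lia. Qed.

Lemma peval_ge_neg_mass p x : 0 <= x <= 1 -> - IZR (neg_mass p) <= peval p x.
Proof.
  intros Hx; induction p as [|c p IH]; simpl; [lra|].
  rewrite plus_IZR.
  assert (IZR (- c) <= IZR (Z.max 0 (- c)) /\ 0 <= IZR (Z.max 0 (- c)))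
    as [Hc Hc0] by (split; apply IZR_le; lia).
  pose proof (IZR_le _ _ (neg_mass_nonneg p)).
  rewrite opp_IZR in Hc. nra.
Qed.

Definition pos_on_unit (p : list Z) : bool :=
  match p with
  | [] => false
  | c :: q => Z.ltb (neg_mass q) c
  end.

Lemma pos_on_unit_spec p x : pos_on_unit p = true -> 0 <= x <= 1 -> 0 < peval p x.
Proof.
  destruct p as [|c q]; simpl; [discriminate|].
  intros Hc%Z.ltb_lt%IZR_lt Hx.
  pose proof (peval_ge_neg_mass q x Hx). pose proof (IZR_le _ _ (neg_mass_nonneg q)).
  nra.
Qed.

Fixpoint pos_on_pieces (p : list Z) (k : Z) (n : nat) : bool :=
  match n with
  | O => true
  | S n => pos_on_unit (ptaylor k p) && pos_on_pieces p (k + 1) n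
  end.

Lemma pos_on_pieces_spec p k n x :
  pos_on_pieces p k n = true -> (0 < n)%nat -> IZR k <= x <= IZR k + INR n ->
  0 < peval p x.
Proof.
  revert k; induction n as [|n IH]; intros k; simpl; [lia|].
  intros [Hk Hrest]%andb_prop _ Hx.
  destruct (Rle_lt_dec x (IZR k + 1)) as [Hle|Hgt].
  - replace x with (IZR k + (x - IZR k)) by ring.
    rewrite <- peval_ptaylor. apply pos_on_unit_spec; [exact Hk|lra].
  - destruct n as [|n]; [simpl in Hx; lra|].
    apply (IH (k + 1)%Z Hrest); [lia|].
    rewrite plus_IZR, S_INR in *. lra.
Qed.

Definition pos_between (p : list Z) (lo hi : Z) : bool :=
  pos_on_pieces p lo (Z.to_nat (hi - lo)).

Lemma pos_between_spec p lo hi x :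
  pos_between p lo hi = true -> (lo < hi)%Z -> IZR lo <= x <= IZR hi -> 0 < peval p x.
Proof.
  intros Hp Hlt Hx. apply (pos_on_pieces_spec p lo _ x Hp); [lia|].
  rewrite INR_IZR_INZ, Z2Nat.id by lia. rewrite minus_IZR. lra.
Qed.

Lemma peval_pos_of_rescaled p m lo hi x :
  pos_between (rescale m p) lo hi = true -> (0 < m)%Z -> (lo < hi)%Z ->
  IZR lo <= IZR m * x <= IZR hi -> 0 < peval p x.
Proof.
  intros Hp Hm Hlt Hx.
  pose proof (pos_between_spec _ _ _ _ Hp Hlt Hx) as H.
  rewrite peval_rescale in H.
  assert (0 < IZR m ^ pred (length p)) by (apply pow_lt, IZR_lt; exact Hm).
  nra.
Qed.

Lemma cube_le u v : u <= v -> u^3 <= v^3.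
Proof.
  intros H. assert (0 <= (v - u) * ((v + u / 2)^2 + 3 * u^2 / 4)) by (apply Rmult_le_pos; nra).
  nra.
Qed.

Lemma hyperbola_param a s : a^2 - s^2 = 1 -> 0 < a + s ->
  a = (a + s + / (a + s)) / 2 /\ s = (a + s - / (a + s)) / 2.
Proof.
  intros Hh Hu. replace (/ (a + s)) with (a - s); [split; field|].
  field_simplify_eq; [nra|lra].
Qed.

Lemma sqrt_sqr_sub1 a : 1 < a < 2 ->
  0 <= sqrt (a^2 - 1) /\ sqrt (a^2 - 1) ^ 2 = a^2 - 1 /\ sqrt (a^2 - 1) ^ 2 < 3.
Proof.
  intros Ha. pose proof (sqrt_pos (a^2 - 1)).
  rewrite pow2_sqrt by nra. split; [exact H|split; [reflexivity|nra]].
Qed.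

Definition g_alg (a s b t : R) : R :=
  s * (a^3 - 8) / a^6 * ((s - t)^3 + a^3) + t * (b^3 - 8) / b^6 * ((s - t)^3 + b^3).

Lemma g_alg_sqrt a b : g a b = g_alg a (sqrt (a^2 - 1)) b (sqrt (b^2 - 1)).
Proof. reflexivity. Qed.

Lemma g_sqrt2_neg a : 1 < a < 2 -> g a (sqrt 2) < 0.
Proof.
  intros Ha. destruct (sqrt_sqr_sub1 a Ha) as [Hs0 [Hs2 _]].
  rewrite g_alg_sqrt, pow2_sqrt by lra.
  replace (2 - 1) with 1 by ring. rewrite sqrt_1.
  pose proof (sqrt_pos 2). pose proof (pow2_sqrt 2 ltac:(lra)) as Hr2.
  unfold g_alg. set (r := sqrt 2) in *. set (s := sqrt (a^2 - 1)) in *.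
  assert (Hr3 : r^3 = 2 * r) by (rewrite <- Hr2; ring).
  assert (Hr6 : r^6 = 8) by (replace (r^6) with ((r^2)^3) by ring; rewrite Hr2; ring).
  rewrite Hr3, Hr6.
  assert (Hr : 1 < r) by nra.
  assert (Hs : 0 < s) by nra.
  assert (Hc : -1 <= (s - 1)^3) by (pose proof (cube_le (-1) (s - 1) ltac:(lra)); lra).
  assert (Ha3 : 1 < a^3 < 8) by (split; nra).
  assert (Hx : s * (a^3 - 8) / a^6 < 0).
  { apply Rdiv_neg_pos; [nra|apply pow_lt; lra]. }
  assert (Hy : 1 * (2 * r - 8) / 8 < 0) by nra.
  nra.
Qed.

Definition b0 : R := 965 / 387.

Lemma sqrt_b0 : sqrt (b0^2 - 1) = 884 / 387.
Proof. apply sqrt_lem_1; unfold b0; lra. Qed.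

Definition g_b0_poly : list Z := [-834418143968901868489347; -11436056422767585298365624;
  -54748597469253193480171977; 619680227855541954797569536; 2388567862428540926992949070;
  4560700774994706879437479696; -39149877662877787331264483148;
  -162180880370792589215452807024; -168666495787544765333517427348;
  357740079555028267295836796880; 157224818697919365332603958598;
  -188165483320995362258061557024; 44730299744496436242479951898;
  -10356068195665457361080520304; 3379076170115509436544207180;
  -663298102516976524678180464; 148359572931953919641015727;
  -11436056422767585298365624; 834418143968901868489347]%Z.

Lemma peval_g_b0_poly u : 0 < u ->
  peval g_b0_poly u = 2 * 46805487731350363080421875 * u^3 * (u^2 + 1)^6 *
    g_alg ((u + / u) / 2) ((u - / u) / 2) b0 (884 / 387).
Proof. intros Hu. unfold g_alg, b0. simpl peval. field. split; apply Rgt_not_eq; nra. Qed.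

Lemma g_alg_b0_pos u : 1 <= u <= 15 / 4 ->
  0 < g_alg ((u + / u) / 2) ((u - / u) / 2) b0 (884 / 387).
Proof.
  intros Hu.
  assert (Hp : 0 < peval g_b0_poly u).
  { apply (peval_pos_of_rescaled g_b0_poly 4 4 15); [vm_compute; reflexivity|lia|lia|lra]. }
  rewrite peval_g_b0_poly in Hp by lra.
  assert (0 < u^3 * (u^2 + 1)^6) by (apply Rmult_lt_0_compat; apply pow_lt; nra).
  nra.
Qed.

Lemma g_b0_pos a : 1 < a < 2 -> 0 < g a b0.
Proof.
  intros Ha. destruct (sqrt_sqr_sub1 a Ha) as [Hs0 [Hs2 Hs3]].
  rewrite g_alg_sqrt, sqrt_b0. set (s := sqrt (a^2 - 1)) in *.
  destruct (hyperbola_param a s) as [Ea Es]; [lra|lra|].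
  pose proof (g_alg_b0_pos (a + s) ltac:(nra)) as H.
  rewrite <- Ea, <- Es in H. exact H.
Qed.

(* [t b^7 y'(b)] for [y(b) = t (b^3 - 8) / b^6], [t = sqrt (b^2 - 1)]. *)
Definition dy_num (b : R) : R := b^2 * (b^3 - 8) + (b^2 - 1) * (48 - 3 * b^3).

Lemma dy_num_pos b : 5 / 4 <= b <= 5 / 2 -> 0 < dy_num b.
Proof.
  intros Hb. replace (dy_num b) with (peval [-48; 0; 40; 3; 0; -2]%Z b)
    by (unfold dy_num; simpl; ring).
  apply (peval_pos_of_rescaled _ 4 5 10); [vm_compute; reflexivity|lia|lia|lra].
Qed.

Lemma dg_core_le2_bound_pos b : 5 / 4 <= b <= 2 ->
  0 < 2 * b * (dy_num b * b^3 + 3 * b^3 * (b^2 - 1) * (b^3 - 8))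
      - (2 * b^2 - 1) * dy_num b * (b^2 - 1).
Proof.
  intros Hb. match goal with |- 0 < ?e =>
    replace e with (peval [48; 0; -184; -3; 168; 11; -48; -12; 0; 6]%Z b)
      by (unfold dy_num; simpl; ring) end.
  apply (peval_pos_of_rescaled _ 4 5 8); [vm_compute; reflexivity|lia|lia|lra].
Qed.

Definition dg_core (s t b : R) : R :=
  let u := s - t in
  -3 * u^2 * t * b^2 * (b^3 - 8) + (b^2 * (b^3 - 8) + t^2 * (48 - 3 * b^3)) * (u^3 + b^3)
  + 3 * b^3 * t^2 * (b^3 - 8).

Lemma dg_core_pos_le2 s t b : 0 <= s -> 0 < t -> t^2 = b^2 - 1 -> 5 / 4 <= b <= 2 ->
  0 < dg_core s t b.
Proof.
  intros Hs Ht Htt Hb. unfold dg_core.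
  replace (b^2 * (b^3 - 8) + t^2 * (48 - 3 * b^3)) with (dy_num b)
    by (rewrite Htt; unfold dy_num; ring).
  pose proof (dy_num_pos b ltac:(lra)) as HN.
  pose proof (dg_core_le2_bound_pos b Hb) as HT.
  set (N := dy_num b) in *.
  assert (Hu3 : - t^3 <= (s - t)^3) by (pose proof (cube_le (- t) (s - t) ltac:(lra)); lra).
  assert (H8 : b^3 - 8 <= 0) by (pose proof (cube_le b 2 ltac:(lra)); lra).
  (* AM-GM: 2 b t <= b^2 + t^2 *)
  assert (Hbt : 2 * b * t <= 2 * b^2 - 1) by nra.
  assert (H1 : 0 <= -3 * (s - t)^2 * t * b^2 * (b^3 - 8)).
  { assert (0 <= (s - t)^2 * t * b^2 * (8 - b^3)).
    { apply Rmult_le_pos; [|lra]. apply Rmult_le_pos; [|nra].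
      apply Rmult_le_pos; [apply pow2_ge_0|lra]. }
    lra. }
  assert (H2 : N * (b^3 - t^3) <= N * ((s - t)^3 + b^3)) by nra.
  assert (H3 : 0 < N * (b^3 - t^3) + 3 * b^3 * t^2 * (b^3 - 8)).
  { replace (t^3) with (t * t^2) by ring. rewrite Htt.
    assert (2 * b * t * (N * (b^2 - 1)) <= (2 * b^2 - 1) * (N * (b^2 - 1)))
      by (apply Rmult_le_compat_r; nra).
    nra. }
  lra.
Qed.

Lemma dg_core_pos_ge2 s t b : 0 <= s -> s^2 < 3 -> 0 < t -> t^2 = b^2 - 1 -> 2 <= b <= 5 / 2 ->
  0 < dg_core s t b.
Proof.
  intros Hs Hs3 Ht Htt Hb. unfold dg_core.
  replace (b^2 * (b^3 - 8) + t^2 * (48 - 3 * b^3)) with (dy_num b)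
    by (rewrite Htt; unfold dy_num; ring).
  pose proof (dy_num_pos b ltac:(lra)) as HN.
  assert (H8 : 0 <= b^3 - 8) by (pose proof (cube_le 2 b ltac:(lra)); lra).
  assert (Hst : s < t) by nra.
  assert (Htb : t < b) by nra.
  assert (Hu3 : - t^3 <= (s - t)^3) by (pose proof (cube_le (- t) (s - t) ltac:(lra)); lra).
  assert (Htb3 : t^3 < b^3) by (pose proof (cube_le t b ltac:(lra)); nra).
  assert (H1 : -3 * t^3 * b^2 * (b^3 - 8) <= -3 * (s - t)^2 * t * b^2 * (b^3 - 8)).
  { assert (0 <= t * b^2 * (b^3 - 8)) by (apply Rmult_le_pos; nra).
    assert ((s - t)^2 <= t^2) by nra. nra. }
  assert (H2 : 0 <= 3 * b^2 * t^2 * (b^3 - 8) * (b - t)).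
  { apply Rmult_le_pos; [|lra]. apply Rmult_le_pos; [|lra]. nra. }
  assert (0 < dy_num b * ((s - t)^3 + b^3)) by (apply Rmult_lt_0_compat; lra).
  nra.
Qed.

Definition dg (a s b t : R) : R :=
  (-3 * (s * (a^3 - 8) / a^6) * (s - t)^2 * b^8 + dg_core s t b) / (t * b^7).

Lemma g_derivable a b : a <> 0 -> 1 < b ->
  derivable_pt_lim (g a) b (dg a (sqrt (a^2 - 1)) b (sqrt (b^2 - 1))).
Proof.
  intros Ha Hb. apply is_derive_Reals. unfold g. cbv zeta. auto_derive.
  - assert (0 < b * (b * 1) + - (1)) by nra.
    repeat split; try lra. apply Rgt_not_eq. repeat apply Rmult_lt_0_compat; lra.
  - replace (b * (b * 1) + - (1)) with (b^2 - 1) by ring.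
    replace (a * (a * 1) - 1) with (a^2 - 1) by ring.
    assert (Ht : 0 < sqrt (b^2 - 1)) by (apply sqrt_lt_R0; nra).
    unfold dg, dg_core. field. repeat split; lra.
Qed.

Lemma dg_pos a s b t : 1 < a < 2 -> 0 <= s -> s^2 < 3 -> 0 < t -> t^2 = b^2 - 1 ->
  5 / 4 <= b <= 5 / 2 -> 0 < dg a s b t.
Proof.
  intros Ha Hs Hs3 Ht Htt Hb. unfold dg.
  apply Rdiv_lt_0_compat; [|apply Rmult_lt_0_compat; [lra|apply pow_lt; lra]].
  assert (Hx : s * (a^3 - 8) / a^6 <= 0).
  { apply Rmult_le_0_r; [|apply Rlt_le, Rinv_0_lt_compat, pow_lt; lra].
    assert (a^3 < 8) by nra. nra. }
  assert (0 <= (s - t)^2 * b^8) by (apply Rmult_le_pos; [apply pow2_ge_0|apply pow_le; lra]).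
  assert (0 < dg_core s t b).
  { destruct (Rle_lt_dec b 2).
    - apply dg_core_pos_le2; lra.
    - apply dg_core_pos_ge2; lra. }
  nra.
Qed.

Lemma g_increasing a b1 b2 : 1 < a < 2 -> 5 / 4 <= b1 -> b1 < b2 -> b2 <= 5 / 2 ->
  g a b1 < g a b2.
Proof.
  intros Ha Hb1 H12 Hb2. destruct (sqrt_sqr_sub1 a Ha) as [Hs0 [_ Hs3]].
  destruct (MVT_cor2 (g a) (fun b => dg a (sqrt (a^2 - 1)) b (sqrt (b^2 - 1))) b1 b2 H12)
    as [c [Ec Hc]].
  { intros c Hc. apply g_derivable; lra. }
  assert (0 < dg a (sqrt (a^2 - 1)) c (sqrt (c^2 - 1))).
  { apply dg_pos; try lra.
    - apply sqrt_lt_R0; nra.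
    - apply pow2_sqrt; nra. }
  nra.
Qed.

Lemma increasing_sign_change (f : R -> R) (l m r : R) :
  l < m < r ->
  (forall x y, l <= x -> x < y -> y <= r -> f x < f y) ->
  (forall x, l <= x <= m -> continuity_pt f x) ->
  f l < 0 -> 0 < f m ->
  exists! z, l < z < r /\ (forall x, l < x < z -> f x < 0) /\ f z = 0 /\
    (forall x, z < x < r -> f x > 0).
Proof.
  intros Hlmr Hinc Hcont Hl Hm.
  destruct (IVT_interv f l m Hcont ltac:(lra) Hl Hm) as [z [Hz Hfz]].
  assert (l < z < m).
  { split; apply Rnot_le_lt; intros Hle.
    - replace z with l in Hfz by lra. lra.
    - replace z with m in Hfz by lra. lra. }
  exists z. split.
  - split; [lra|]. split; [|split; [exact Hfz|]].
    + intros x Hx. rewrite <- Hfz. apply Hinc; lra.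
    + intros x Hx. rewrite <- Hfz. apply Rlt_gt, Hinc; lra.
  - intros z' [Hz' [_ [Hfz' _]]].
    destruct (Rtotal_order z z') as [Hlt|[Heq|Hgt]]; [|exact Heq|].
    + pose proof (Hinc z z' ltac:(lra) Hlt ltac:(lra)). lra.
    + pose proof (Hinc z' z ltac:(lra) Hgt ltac:(lra)). lra.
Qed.

Theorem lemma4 : forall a : R, 1 < a < 2 ->
  exists! bh : R, sqrt 2 < bh < 5 / 2 /\
    (forall b, sqrt 2 < b < bh -> g a b < 0) /\
    g a bh = 0 /\
    (forall b, bh < b < 5 / 2 -> g a b > 0).
Proof.
  intros a Ha.
  assert (Hr : 5 / 4 < sqrt 2 < b0).
  { pose proof (sqrt_pos 2). pose proof (pow2_sqrt 2 ltac:(lra)). unfold b0. nra. }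
  apply (increasing_sign_change (g a) (sqrt 2) b0 (5 / 2)).
  - unfold b0 in *; lra.
  - intros x y Hx Hxy Hy. apply g_increasing; lra.
  - intros x Hx. apply derivable_continuous_pt.
    eexists. apply g_derivable; lra.
  - exact (g_sqrt2_neg a Ha).
  - exact (g_b0_pos a Ha).
Qed.
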